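(* Let $\Phi:\{1,\dots,B\}\to\mathcal{A}=\{1,\dots,A\}$ and let $\Delta(\varepsilon)$ be a $B\times B$ stochastic matrix family normally parameterized by $\varepsilon\ge0$. Let $v=v(\varepsilon),\hat v=\hat v(\varepsilon):[0,\infty)\to W$ be mappings analytic at $\varepsilon=0$, and let $z_{-n}^0\in\mathcal{A}^{n+1}$ and $k\ge0$ be such that $\mathrm{ord}(p_v(z_{-n}^{-1}))\le k$ and $\mathrm{ord}(p_{\hat v}(z_{-n}^{-1}))\le k$. Then $b_{v,j}(z_{-n}^0)=b_{\hat v,j}(z_{-n}^0)$ for all $j$ with $0\le j\le n-4k-1$.
   Context: $W=\{w\in\mathbb{R}^B: w_i\ge0,\ \sum_i w_i=1\}$. For $a\in\mathcal{A}$, $\Delta_a$ is the $B\times B$ matrix with $\Delta_a(i,j)=\Delta(i,j)$ if $\Phi(j)=a$ and $0$ otherwise. $\Delta(\varepsilon)$ is normally parameterized if (i) each entry is analytic at $\varepsilon=0$, (ii) for $\varepsilon>0$, $\Delta(\varepsilon)$ is non-negative and irreducible, (iii) for every $a$, $\Delta_a(0)$ is the zero matrix or has rank one. For a mapping $v$ and a sequence $z_{-n}^0$, $p_v(z_{-n}^{-1})=v\Delta_{z_{-n}}\cdots\Delta_{z_{-1}}\mathbf{1}$, $p_v(z_{-n}^{0})=v\Delta_{z_{-n}}\cdots\Delta_{z_{0}}\mathbf{1}$, and $p_v(z_0\mid z_{-n}^{-1})=p_v(z_{-n}^0)/p_v(z_{-n}^{-1})$; $b_{v,j}(z_{-n}^0)$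 is the coefficient of $\varepsilon^j$ in the Taylor expansion of $p_v(z_0\mid z_{-n}^{-1})$ at $\varepsilon=0$. For $f$ analytic at $0$, $\mathrm{ord}(f)$ is the degree of the first nonzero term of its Taylor series at $0$. *)

From Stdlib Require Import Reals.
From Coquelicot Require Import Coquelicot.
From mathcomp Require Import all_boot all_algebra.
From mathcomp Require Import Rstruct.

Set Implicit Arguments.
Unset Strict Implicit.
Unset Printing Implicit Defensive.

Import GRing.Theory Num.Theory.

(* a is the Taylor coefficient sequence at 0 of f: the power series with
   coefficients a converges on a neighbourhood (-r,r) of 0 and agrees with
   f for 0 < eps < r (the functions are only of interest for eps >= 0). *)
Definition is_taylor0 (a : nat -> R) (f : R -> R) : Prop :=
  exists r : R, (0 < r)%R /\
    (forall x : R, (Rabs x < r)%R -> ex_pseries a x) /\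
    (forall x : R, (0 < x < r)%R -> is_pseries a x (f x)).

Definition analytic0 (f : R -> R) : Prop :=
  exists a : nat -> R, is_taylor0 a f /\ f 0%R = a 0%nat.

Definition ord_le (f : R -> R) (k : nat) : Prop :=
  exists a : nat -> R, is_taylor0 a f /\ exists j : nat, (j <= k)%N /\ a j <> 0%R.

Definition in_W (B : nat) (w : 'rV[R]_B) : Prop :=
  (forall i, (0 <= w ord0 i)%R) /\ (\sum_(i < B) w ord0 i = 1)%R.

Definition nonneg_mx (B : nat) (M : 'M[R]_B) : Prop :=
  forall i j, (0 <= M i j)%R.

Definition stochastic_mx (B : nat) (M : 'M[R]_B) : Prop :=
  nonneg_mx M /\ forall i, (\sum_(j < B) M i j = 1)%R.

Definition irreducible_mx (B : nat) (M : 'M[R]_B) : Prop :=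
  forall i j, exists m : nat, (0 < (M ^+ m) i j)%R.

Definition Delta_a (A B : nat) (Phi : 'I_B -> 'I_A) (M : 'M[R]_B) (a : 'I_A)
  : 'M[R]_B := \matrix_(i, j) (if Phi j == a then M i j else 0%R).

Definition normally_parameterized (A B : nat) (Phi : 'I_B -> 'I_A)
  (Delta : R -> 'M[R]_B) : Prop :=
  (forall i j, analytic0 (fun e => Delta e i j)) /\
  (forall e : R, (0 < e)%R -> nonneg_mx (Delta e) /\ irreducible_mx (Delta e)) /\
  (forall a : 'I_A, (\rank (Delta_a Phi (Delta 0%R) a) <= 1)%N).

Fixpoint row_word (A B : nat) (Phi : 'I_B -> 'I_A) (M : 'M[R]_B)
  (v : 'rV[R]_B) (w : seq 'I_A) : 'rV[R]_B :=
  match w with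
  | [::] => v
  | a :: w' => row_word Phi M (mulmx v (Delta_a Phi M a)) w'
  end.

Definition p_v (A B : nat) (Phi : 'I_B -> 'I_A) (Delta : R -> 'M[R]_B)
  (v : R -> 'rV[R]_B) (w : seq 'I_A) (e : R) : R :=
  (mulmx (row_word Phi (Delta e) (v e) w) (const_mx 1%R : 'cV[R]_B)) ord0 ord0.

(* eps |-> p_v(z_0 | z_{-n}^{-1}) for z = [:: z_{-n}; ...; z_{-1}; z_0],
   n = size z - 1 *)
Definition p_cond (A B : nat) (Phi : 'I_B -> 'I_A) (Delta : R -> 'M[R]_B)
  (v : R -> 'rV[R]_B) (z : seq 'I_A) (e : R) : R :=
  (p_v Phi Delta v z e / p_v Phi Delta v (take (size z).-1 z) e)%R.

(* The conditional probability is the ratio N / D of N = p_v(z_{-n}^0) and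
   D = p_v(z_{-n}^{-1}).  Write Delta_a(e) = Delta_a(0) + e E_a(e) with E_a
   analytic.  Because Delta_a(0) has rank at most one, M Y M^T = 0 for
   M = Delta_a(0) and every antisymmetric Y, so conjugating an analytic
   antisymmetric matrix by Delta_a(e) yields e times another one.  Starting
   from X = u 1^T - 1 u^T, u = Delta_{z_0} 1, and running through the n letters
   of z_{-n}^{-1} gives N_v D_vh - N_vh D_v = e^n H(e) with H analytic.
   The denominators vanish to orders k1, k2 <= k, so the difference of the two
   conditional probabilities is e^(n - k1 - k2) times an analytic function and
   the Taylor coefficients agree for j < n - k1 - k2, a range containing
   j <= n - 4k - 1.  Analyticity of N / D itself comes from 0 <= N <= D, which
   forces N to vanish at least to the order of D. *)

From Stdlib Require Import Reals Lra Lia.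
From Coquelicot Require Import Coquelicot.
From mathcomp Require Import all_boot all_algebra.
From mathcomp Require Import Rstruct zify.

Set Implicit Arguments.
Unset Strict Implicit.
Unset Printing Implicit Defensive.

Local Open Scope R_scope.

(* mathcomp's 0 on R is not syntactically Stdlib's 0, which lra needs. *)
Lemma ltr0_Rlt (x : R) : (0 < x)%R -> 0 < x.
Proof. by move/RltP. Qed.

Lemma ler0_Rle (x : R) : (0 <= x)%R -> 0 <= x.
Proof. by move/RleP. Qed.

Lemma ball_R (c : R) (r : posreal) (x : R) : ball c r x <-> Rabs (x - c) < r.
Proof. by []. Qed.

Lemma at_right0P (P : R -> Prop) :
  at_right 0 P <-> exists r, 0 < r /\ forall x, 0 < x < r -> P x.
Proof.
split.
- move=> [r HP]; exists r; split=> [|x [Hx0 Hxr]]; first exact: cond_pos.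
  by apply: HP => //; apply/ball_R; rewrite Rminus_0_r Rabs_pos_eq; lra.
- move=> [r [Hr HP]]; exists (mkposreal r Hr) => x /ball_R /= Hx Hx0.
  by apply: HP; move: Hx; rewrite Rminus_0_r Rabs_pos_eq; lra.
Qed.

Lemma at_right0_pos (P : R -> Prop) : (forall x, 0 < x -> P x) -> at_right 0 P.
Proof. by move=> HP; apply/at_right0P; exists 1; split=> [|x []]; [lra | auto]. Qed.

Lemma at_right0_and (P Q : R -> Prop) :
  at_right 0 P -> at_right 0 Q -> at_right 0 (fun x => P x /\ Q x).
Proof. exact: filter_and. Qed.

Lemma at_right0_gt : at_right 0 (fun x => 0 < x).
Proof. exact: at_right0_pos. Qed.

Lemma locally_at_right (x : R) (P : R -> Prop) : locally x P -> at_right x P.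
Proof. by apply: filter_imp. Qed.

(** * Power series germs at 0+ *)

(* As in [is_taylor0], only the values at x > 0 matter; "near 0+" is Coquelicot's
   [at_right 0] filter. *)
Definition is_pseries_germ (a : nat -> R) (f : R -> R) : Prop :=
  Rbar_lt 0 (CV_radius a) /\ at_right 0 (fun x => f x = PSeries a x).

Definition ex_pseries_germ (f : R -> R) : Prop := exists a, is_pseries_germ a f.

Lemma CV_radius_near0 (a : nat -> R) :
  Rbar_lt 0 (CV_radius a) -> locally 0 (fun x => Rbar_lt (Rabs x) (CV_radius a)).
Proof.
case: (CV_radius a) => [r | | ] //= Hr.
- apply: (locally_interval _ _ (- r) r) => /= [|| y Hy1 Hy2]; try lra.
  by apply: Rabs_def1.
- by apply: filter_forall.
Qed.

Lemma ex_pseries_CV_radius (a : nat -> R) (x : R) :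
  ex_pseries a x -> Rbar_le (Rabs x) (CV_radius a).
Proof.
move=> Hx; apply: Rbar_not_lt_le => Hlt; apply: (CV_disk_outside a x Hlt).
apply: is_lim_seq_ext (ex_series_lim_0 _ Hx) => n.
by rewrite pow_n_pow /scal /= /mult /= Rmult_comm.
Qed.

Lemma is_taylor0_germ (a : nat -> R) (f : R -> R) :
  is_taylor0 a f <-> is_pseries_germ a f.
Proof.
split.
- move=> [r [/ltr0_Rlt Hr [Hex Hf]]].
  have Hrad : Rbar_le (r / 2) (CV_radius a).
    rewrite -[r / 2]Rabs_pos_eq; last lra.
    by apply/ex_pseries_CV_radius/Hex/RltP; rewrite Rabs_pos_eq; lra.
  split; first by apply: Rbar_lt_le_trans Hrad; rewrite /=; lra.
  apply/at_right0P; exists r; split => // x Hx.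
  by symmetry; apply/is_pseries_unique/Hf/andP; split; apply/RltP; case: Hx.
- move=> [Hrad /at_right0P [r [Hr Hf]]].
  have [rho [Hrho Hin]] : exists rho, 0 < rho /\ forall x, Rabs x < rho ->
      Rbar_lt (Rabs x) (CV_radius a).
    have [eps Heps] := CV_radius_near0 Hrad.
    by exists eps; split=> [|x Hx]; [exact: cond_pos | apply/Heps/ball_R; rewrite Rminus_0_r].
  exists (Rmin r rho); split; first by apply/RltP; apply: Rmin_pos.
  split=> [x /RltP Hx | x /andP [/ltr0_Rlt Hx0 /RltP Hxr]].
  + by apply/CV_radius_inside/Hin; move: (Rmin_r r rho); lra.
  + have Hx : Rbar_lt (Rabs x) (CV_radius a).
      by apply: Hin; move: (Rmin_r r rho); rewrite Rabs_pos_eq; lra.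
    rewrite Hf; last by move: (Rmin_l r rho); lra.
    exact/PSeries_correct/CV_radius_inside.
Qed.

Lemma is_pseries_germ_near0 (a : nat -> R) (f : R -> R) : is_pseries_germ a f ->
  at_right 0 (fun x => Rbar_lt (Rabs x) (CV_radius a) /\ f x = PSeries a x).
Proof.
by move=> [/CV_radius_near0/locally_at_right Hrad Hf]; apply: filter_and.
Qed.

Lemma is_pseries_germ_ext (a : nat -> R) (f g : R -> R) : is_pseries_germ a f ->
  at_right 0 (fun x => f x = g x) -> is_pseries_germ a g.
Proof.
move=> [Hrad Hf] Hfg; split=> //.
by apply: filter_imp (at_right0_and Hf Hfg) => x [<- <-].
Qed.

Definition PS_cst (c : R) (n : nat) : R := if n is O then c else 0.

Lemma CV_radius_cst (c : R) : CV_radius (PS_cst c) = p_infty.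
Proof.
by rewrite -CV_radius_decr_1 -CV_radius_const_0; apply: CV_radius_ext; case.
Qed.

Lemma PSeries_cst (c x : R) : PSeries (PS_cst c) x = c.
Proof.
rewrite PSeries_decr_1; last by apply: CV_radius_inside; rewrite CV_radius_cst.
rewrite (PSeries_ext _ (fun _ => 0)); last by case.
by rewrite PSeries_const_0 /= Rmult_0_r Rplus_0_r.
Qed.

Lemma is_pseries_germ_cst (c : R) : is_pseries_germ (PS_cst c) (fun _ => c).
Proof.
by split; [rewrite CV_radius_cst | apply: at_right0_pos => x _; rewrite PSeries_cst].
Qed.

Lemma is_pseries_germ_plus (a b : nat -> R) (f g : R -> R) :
  is_pseries_germ a f -> is_pseries_germ b g ->
  is_pseries_germ (PS_plus a b) (fun x => f x + g x).
Proof.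
move=> Hf Hg; have Hrad := CV_radius_plus a b; split.
  by apply: Rbar_lt_le_trans Hrad; apply: Rbar_min_case; [case: Hf | case: Hg].
apply: filter_imp (at_right0_and (is_pseries_germ_near0 Hf) (is_pseries_germ_near0 Hg)).
by move=> x [[Ha ->] [Hb ->]]; rewrite PSeries_plus //; apply: CV_radius_inside.
Qed.

Lemma is_pseries_germ_opp (a : nat -> R) (f : R -> R) :
  is_pseries_germ a f -> is_pseries_germ (PS_opp a) (fun x => - f x).
Proof.
move=> [Hrad Hf]; split; first by rewrite CV_radius_opp.
by apply: filter_imp Hf => x ->; rewrite PSeries_opp.
Qed.

Lemma is_pseries_germ_mult (a b : nat -> R) (f g : R -> R) :
  is_pseries_germ a f -> is_pseries_germ b g ->
  is_pseries_germ (PS_mult a b) (fun x => f x * g x).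
Proof.
move=> Hf Hg.
have Hfg := at_right0_and (is_pseries_germ_near0 Hf) (is_pseries_germ_near0 Hg).
have [x0 [Hx0 [[Ha _] [Hb _]]]] :=
  Hierarchy.filter_ex _ (at_right0_and at_right0_gt Hfg).
have Hrad := ex_pseries_CV_radius (ex_pseries_mult _ _ _ Ha Hb).
split; first by apply: Rbar_lt_le_trans Hrad; apply: Rabs_pos_lt; lra.
by apply: filter_imp Hfg => x [[Hxa ->] [Hxb ->]]; rewrite PSeries_mult.
Qed.

Lemma is_pseries_germ_incr_n (a : nat -> R) (f : R -> R) (m : nat) :
  is_pseries_germ a f -> is_pseries_germ (PS_incr_n a m) (fun x => x ^ m * f x).
Proof.
move=> [Hrad Hf]; split.
  by elim: m => //= m IHm; rewrite CV_radius_incr_1.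
by apply: filter_imp Hf => x ->; rewrite PSeries_incr_n.
Qed.

Lemma CV_radius_decr_n (a : nat -> R) (m : nat) :
  CV_radius (PS_decr_n a m) = CV_radius a.
Proof.
elim: m a => [|m IHm] a; first by apply: CV_radius_ext.
rewrite -(CV_radius_decr_1 a) -(IHm (PS_decr_1 a)).
by apply: CV_radius_ext.
Qed.

Lemma is_pseries_germ_decr_n (a : nat -> R) (f : R -> R) (m : nat) :
  is_pseries_germ a f -> (forall k, (k < m)%N -> a k = 0) ->
  is_pseries_germ (PS_decr_n a m) (fun x => f x / x ^ m).
Proof.
move=> [Hrad Hf] Ha0; split; first by rewrite CV_radius_decr_n.
apply: filter_imp (at_right0_and at_right0_gt Hf).
move=> x [Hx ->]; rewrite (PSeries_decr_n_aux _ _ _ (fun k Hk => Ha0 k (introT ltP Hk))).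
by field; apply: pow_nonzero; lra.
Qed.

Lemma is_pseries_germ_decr_1 (a : nat -> R) (f : R -> R) :
  is_pseries_germ a f -> is_pseries_germ (PS_decr_1 a) (fun x => (f x - a O) / x).
Proof.
move=> Hf; split; first by rewrite CV_radius_decr_1; case: Hf.
apply: filter_imp (at_right0_and at_right0_gt (is_pseries_germ_near0 Hf)).
move=> x [Hx [Hxa ->]]; rewrite (PSeries_decr_1 _ _ (CV_radius_inside _ _ Hxa)).
by field; lra.
Qed.

Lemma is_pseries_germ_lim (a : nat -> R) (f : R -> R) :
  is_pseries_germ a f -> filterlim f (at_right 0) (locally (a O)).
Proof.
move=> [Hrad Hf]; rewrite -PSeries_0.
apply: filterlim_ext_loc (filter_imp _ _ _ Hf) _ => [x ->//|].
apply: filterlim_filter_le_1 (@locally_at_right 0) _.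
by apply/continuity_pt_filterlim/PSeries_continuity; rewrite Rabs_R0.
Qed.

Lemma is_pseries_germ_neq0 (a : nat -> R) (f : R -> R) :
  is_pseries_germ a f -> a O <> 0 -> at_right 0 (fun x => f x <> 0).
Proof.
move=> /is_pseries_germ_lim /filterlim_locally Hlim /Rabs_pos_lt Ha0.
apply: filter_imp (Hlim (mkposreal _ Ha0)) => x /ball_R /= + Hx.
by rewrite Hx Rminus_0_l Rabs_Ropp; lra.
Qed.

Lemma is_pseries_germ_coef0_abs_le (a b : nat -> R) (f g : R -> R) :
  is_pseries_germ a f -> is_pseries_germ b g ->
  at_right 0 (fun x => Rabs (f x) <= Rabs (g x)) -> Rabs (a O) <= Rabs (b O).
Proof.
move=> /is_pseries_germ_lim Hf /is_pseries_germ_lim Hg Hfg.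
apply: (@filterlim_le _ (at_right 0) _ (fun x => Rabs (f x)) (fun x => Rabs (g x))
          (Rabs (a O)) (Rabs (b O)) Hfg).
- exact: filterlim_comp Hf (filterlim_Rabs (a O)).
- exact: filterlim_comp Hg (filterlim_Rabs (b O)).
Qed.

Lemma is_pseries_germ_dominated (m : nat) (a b : nat -> R) (f g : R -> R) :
  is_pseries_germ a f -> is_pseries_germ b g ->
  at_right 0 (fun x => Rabs (f x) <= Rabs (g x)) ->
  (forall i, (i < m)%N -> b i = 0) -> forall i, (i < m)%N -> a i = 0.
Proof.
elim: m a b f g => [//|m IHm] a b f g Hf Hg Hfg Hb.
have Ha0 : a O = 0.
  apply: Rabs_eq_0; apply: Rle_antisym; last exact: Rabs_pos.
  by rewrite -Rabs_R0 -(Hb O) //; exact: is_pseries_germ_coef0_abs_le Hf Hg Hfg.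
case=> [//|i] Hi.
apply: (IHm _ _ _ _ (is_pseries_germ_decr_1 Hf) (is_pseries_germ_decr_1 Hg)) => //.
- apply: filter_imp (at_right0_and at_right0_gt Hfg) => x [Hx Hfgx].
  rewrite Ha0 Hb // !Rminus_0_r !Rabs_div; try lra.
  by apply: Rmult_le_compat_r => //; apply/Rlt_le/Rinv_0_lt_compat/Rabs_pos_lt; lra.
- by move=> j Hj; apply: Hb.
Qed.

Lemma is_pseries_germ_unique (a b : nat -> R) (f : R -> R) :
  is_pseries_germ a f -> is_pseries_germ b f -> forall i, a i = b i.
Proof.
move=> Ha Hb i; apply: Rminus_diag_uniq.
have Hd := is_pseries_germ_plus Ha (is_pseries_germ_opp Hb).
have := is_pseries_germ_dominated (m := i.+1) Hd (is_pseries_germ_cst 0) _ _ (ltnSn i).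
apply=> [|[|j]] //; apply: at_right0_pos => x _.
by rewrite Rplus_opp_r Rabs_R0; lra.
Qed.

Lemma ex_pseries_germ_ext (f g : R -> R) :
  ex_pseries_germ f -> at_right 0 (fun x => f x = g x) -> ex_pseries_germ g.
Proof. by move=> [a Ha] Hfg; exists a; apply: is_pseries_germ_ext Hfg. Qed.

Lemma ex_pseries_germ_cst (c : R) : ex_pseries_germ (fun _ => c).
Proof. by exists (PS_cst c); apply: is_pseries_germ_cst. Qed.

Lemma ex_pseries_germ_id : ex_pseries_germ (fun x => x).
Proof.
exists (PS_incr_n (PS_cst 1) 1).
apply: is_pseries_germ_ext (is_pseries_germ_incr_n 1 (is_pseries_germ_cst 1)) _.
by apply: at_right0_pos => x _ /=; ring.
Qed.

Lemma ex_pseries_germ_plus (f g : R -> R) :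
  ex_pseries_germ f -> ex_pseries_germ g -> ex_pseries_germ (fun x => f x + g x).
Proof. by move=> [a Ha] [b Hb]; exists (PS_plus a b); apply: is_pseries_germ_plus. Qed.

Lemma ex_pseries_germ_opp (f : R -> R) :
  ex_pseries_germ f -> ex_pseries_germ (fun x => - f x).
Proof. by move=> [a Ha]; exists (PS_opp a); apply: is_pseries_germ_opp. Qed.

Lemma ex_pseries_germ_mult (f g : R -> R) :
  ex_pseries_germ f -> ex_pseries_germ g -> ex_pseries_germ (fun x => f x * g x).
Proof. by move=> [a Ha] [b Hb]; exists (PS_mult a b); apply: is_pseries_germ_mult. Qed.

Lemma ex_pseries_germ_analytic0 (f : R -> R) : analytic0 f -> ex_pseries_germ f.
Proof. by move=> [a [/is_taylor0_germ Ha _]]; exists a. Qed.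

Lemma ex_pseries_germ_diff_quot (f : R -> R) :
  analytic0 f -> ex_pseries_germ (fun x => (f x - f 0) / x).
Proof.
by move=> [a [/is_taylor0_germ Ha ->]]; exists (PS_decr_1 a); apply: is_pseries_germ_decr_1.
Qed.

(** * Reciprocal of a power series *)

(* Coefficients of the reciprocal series: c_0 = 1 / a_0 and
   a_0 c_(m+1) = - sum_(k <= m) a_(k+1) c_(m-k); [PS_inv_upto a m i] is c_i for i <= m. *)
Fixpoint PS_inv_upto (a : nat -> R) (m : nat) : nat -> R :=
  if m is m'.+1 then
    fun i => if (i <= m')%N then PS_inv_upto a m' i
             else - / a O * sum_f_R0 (fun k => a k.+1 * PS_inv_upto a m' (m' - k)%coq_nat) m'
  else fun _ => / a O.

Definition PS_inv (a : nat -> R) (n : nat) : R := PS_inv_upto a n n.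

Lemma PS_inv_uptoE (a : nat -> R) (m i : nat) :
  (i <= m)%N -> PS_inv_upto a m i = PS_inv a i.
Proof.
elim: m => [|m IHm] Hi; first by move: Hi; rewrite leqn0 => /eqP ->.
rewrite /=; case: (leqP i m) => Him; first exact: IHm.
have -> : i = m.+1 by apply/eqP; rewrite eqn_leq Hi Him.
by rewrite /PS_inv /= ltnn.
Qed.

Lemma PS_invS (a : nat -> R) (m : nat) :
  PS_inv a m.+1 = - / a O * sum_f_R0 (fun k => a k.+1 * PS_inv a (m - k)%coq_nat) m.
Proof.
rewrite /PS_inv /= ltnn; congr (_ * _); apply: PartSum.sum_eq => k _.
by rewrite PS_inv_uptoE //; apply/leP; lia.
Qed.

Lemma PS_mult_inv (a : nat -> R) (n : nat) :
  a O <> 0 -> PS_mult a (PS_inv a) n = PS_cst 1 n.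
Proof.
move=> Ha0; rewrite /PS_mult; case: n => [|m]; first by rewrite /= /PS_inv /=; field.
rewrite decomp_sum; last lia.
by rewrite PS_invS /=; field.
Qed.

Lemma sum_geom_half_le (q : R) (m : nat) :
  0 <= q <= / 2 -> sum_f_R0 (fun k => q ^ k.+1) m <= 2 * q - 2 * q ^ m.+2.
Proof.
move=> Hq; have Hqm k : 0 <= q ^ k by apply: pow_le; lra.
elim: m => [|m IHm] /=; first nra.
by have := Hqm m.+2; rewrite /= in IHm *; nra.
Qed.

Lemma PS_invS_abs_le (a : nat -> R) (m : nat) (rho : R) : a O <> 0 -> 0 <= rho ->
  Rabs (PS_inv a m.+1) * rho ^ m.+1 <= / Rabs (a O) *
    sum_f_R0 (fun k => Rabs (a k.+1) * rho ^ k.+1 *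
                       (Rabs (PS_inv a (m - k)%coq_nat) * rho ^ (m - k)%coq_nat)) m.
Proof.
move=> Ha0 Hrho; have Hrm : 0 <= rho ^ m.+1 by apply: pow_le.
rewrite PS_invS Rabs_mult Rabs_Ropp Rabs_inv Rmult_assoc.
apply: Rmult_le_compat_l; first by apply/Rlt_le/Rinv_0_lt_compat/Rabs_pos_lt.
apply: Rle_trans (Rmult_le_compat_r _ _ _ Hrm (sum_f_R0_triangle _ _)) _.
rewrite Rmult_comm scal_sum; apply: Req_le; apply: PartSum.sum_eq => k Hk.
rewrite Rabs_mult (_ : m.+1 = k.+1 + (m - k)%coq_nat)%coq_nat ?pow_add; first ring.
lia.
Qed.

(* With L = 2 + 2 M / |a_0|, the induction closes since sum_(k >= 1) L^-k <= 2 / L. *)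
Lemma PS_inv_geom_bound (a : nat -> R) (r M : R) : a O <> 0 -> 0 < r ->
  (forall n, Rabs (a n) * r ^ n <= M) ->
  exists rho, 0 < rho /\ forall n, Rabs (PS_inv a n) * rho ^ n <= / Rabs (a O).
Proof.
move=> Ha0 Hr HM.
set be := / Rabs (a O); set L := 2 + 2 * M * be; set q := / L.
have Hbe : 0 < be by apply/Rinv_0_lt_compat/Rabs_pos_lt.
have HM0 : 0 <= M by apply: Rle_trans (HM O); apply: Rmult_le_pos (Rabs_pos _) _; lra.
have HL : 2 <= L by rewrite /L; nra.
have Hq : 0 < q <= / 2 by split; [apply: Rinv_0_lt_compat | apply: Rinv_le_contravar]; lra.
have HqM : 2 * q * (M * be) <= 1.
  have HL0 : L <> 0 by lra.
  have -> : 2 * q * (M * be) = 1 - 2 * q by move: HL0; rewrite /q /L => HL0; field.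
  lra.
exists (r * q); split; first nra.
elim/ltn_ind => -[_ | m IHm].
  by rewrite /PS_inv /= Rmult_1_r Rabs_inv; apply: Rle_refl.
have Hrq : 0 <= r * q by nra.
apply: Rle_trans (PS_invS_abs_le m Ha0 Hrq) _.
rewrite -/be -[X in _ <= X]Rmult_1_r; apply: Rmult_le_compat_l; first lra.
apply: Rle_trans (sum_Rle _ (fun k => q ^ k.+1 * (M * be)) _ _) _.
  move=> k Hk.
  have Hc := IHm (m - k)%coq_nat (ltac:(apply/ltP; lia)).
  have Hak := HM k.+1.
  pose X := Rabs (PS_inv a (m - k)%coq_nat) * (r * q) ^ (m - k)%coq_nat.
  have -> : Rabs (a k.+1) * (r * q) ^ k.+1 * X = q ^ k.+1 * (Rabs (a k.+1) * r ^ k.+1 * X).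
    by rewrite Rpow_mult_distr; ring.
  apply: Rmult_le_compat_l; first by apply: pow_le; lra.
  apply: Rmult_le_compat => //; first exact: Rmult_le_pos (Rabs_pos _) (pow_le _ _ (Rlt_le _ _ Hr)).
  exact: Rmult_le_pos (Rabs_pos _) (pow_le _ _ Hrq).
rewrite -scal_sum.
have HMbe : 0 <= M * be by nra.
have Hqm : 0 <= q ^ m.+2 by apply: pow_le; lra.
have Hsum := sum_geom_half_le m (conj (Rlt_le _ _ (proj1 Hq)) (proj2 Hq)).
nra.
Qed.

Lemma CV_radius_pos_bounded (a : nat -> R) : Rbar_lt 0 (CV_radius a) ->
  exists r M, 0 < r /\ forall n, Rabs (a n) * r ^ n <= M.
Proof.
move=> /CV_radius_near0/locally_at_right Hrad.
have [x [Hx0 Hx]] := Hierarchy.filter_ex _ (at_right0_and at_right0_gt Hrad).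
have Hlim := ex_series_lim_0 _ (CV_disk_inside a x Hx).
have [M HM] := filterlim_bounded (fun n => Rabs (a n * x ^ n)) (ex_intro _ 0 Hlim).
exists x, M; split=> // n; move: (HM n).
by rewrite /norm /= /abs /= Rabs_Rabsolu Rabs_mult (Rabs_pos_eq (x ^ n)) //; apply: pow_le; lra.
Qed.

Lemma CV_radius_pos_of_bounded (a : nat -> R) (r M : R) : 0 < r ->
  (forall n, Rabs (a n) * r ^ n <= M) -> Rbar_lt 0 (CV_radius a).
Proof.
move=> Hr HM; apply: Rbar_lt_le_trans (proj1 (CV_radius_bounded a) r _) => //.
exists M => n; rewrite Rabs_mult (Rabs_pos_eq (r ^ n)) //; apply: pow_le; lra.
Qed.

Lemma is_pseries_germ_PSeries (a : nat -> R) :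
  Rbar_lt 0 (CV_radius a) -> is_pseries_germ a (PSeries a).
Proof. by move=> Hrad; split=> //; apply: at_right0_pos. Qed.

Lemma is_pseries_germ_inv (a : nat -> R) (f : R -> R) :
  is_pseries_germ a f -> a O <> 0 -> is_pseries_germ (PS_inv a) (fun x => / f x).
Proof.
move=> Hf Ha0.
have Hrad : Rbar_lt 0 (CV_radius (PS_inv a)).
  have [r [M [Hr HM]]] := CV_radius_pos_bounded (proj1 Hf).
  have [rho [Hrho Hbound]] := PS_inv_geom_bound Ha0 Hr HM.
  exact: CV_radius_pos_of_bounded Hrho Hbound.
split=> //.
have [_ Hprod] := is_pseries_germ_mult Hf (is_pseries_germ_PSeries Hrad).
apply: filter_imp Hprod => x.
rewrite (PSeries_ext _ _ _ (fun n => PS_mult_inv n Ha0)) PSeries_cst => Hx1.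
have Hfx : f x <> 0 by move=> Hfx0; rewrite Hfx0 Rmult_0_l in Hx1; lra.
by apply: (Rmult_eq_reg_l (f x)) => //; rewrite Rinv_r.
Qed.

(** * Order of vanishing and quotients *)

Lemma is_pseries_germ_order (a : nat -> R) (f : R -> R) (k : nat) :
  is_pseries_germ a f -> a k <> 0 ->
  exists m (g : R -> R), (m <= k)%N /\ (forall i, (i < m)%N -> a i = 0) /\
    ex_pseries_germ (fun x => / g x) /\
    at_right 0 (fun x => g x <> 0 /\ f x = x ^ m * g x).
Proof.
move=> Hf Hak.
have Hex : exists j, a j != 0 by exists k; apply/eqP.
case: (ex_minnP Hex) => m /eqP Ham Hmin.
have Hlow i : (i < m)%N -> a i = 0.
  by move=> Him; apply/eqP; apply: contraTT Him => /Hmin; rewrite -leqNgt.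
have Hg := is_pseries_germ_decr_n Hf Hlow.
have Hg0 : PS_decr_n a m O <> 0 by rewrite /PS_decr_n Nat.add_0_r.
exists m, (fun x => f x / x ^ m); split; first by apply: Hmin; apply/eqP.
split=> //; split; first by exists (PS_inv (PS_decr_n a m)); apply: is_pseries_germ_inv.
apply: filter_imp (at_right0_and at_right0_gt (is_pseries_germ_neq0 Hg Hg0)).
by move=> x [Hx Hgx]; split=> //; field; apply: pow_nonzero; lra.
Qed.

Lemma ex_pseries_germ_div_dominated (N D : R -> R) (a : nat -> R) (k : nat) :
  is_pseries_germ a D -> a k <> 0 -> ex_pseries_germ N ->
  at_right 0 (fun x => Rabs (N x) <= Rabs (D x)) ->
  ex_pseries_germ (fun x => N x / D x).
Proof.
move=> HD Hak [b HN] Hdom.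
have [m [g [_ [Hlow [Hginv Hg]]]]] := is_pseries_germ_order HD Hak.
have HNm : ex_pseries_germ (fun x => N x / x ^ m).
  exists (PS_decr_n b m); apply: is_pseries_germ_decr_n => //.
  exact: is_pseries_germ_dominated HN HD Hdom Hlow.
apply: ex_pseries_germ_ext (ex_pseries_germ_mult HNm Hginv) _.
apply: filter_imp (at_right0_and at_right0_gt Hg) => x [Hx [Hgx ->]].
by field; split=> //; apply: pow_nonzero; lra.
Qed.

Lemma is_pseries_germ_div_coef_eq (N1 D1 N2 D2 H : R -> R) (a1 a2 c1 c2 : nat -> R)
    (k1 k2 n j : nat) :
  is_pseries_germ a1 D1 -> a1 k1 <> 0 -> is_pseries_germ a2 D2 -> a2 k2 <> 0 ->
  is_pseries_germ c1 (fun x => N1 x / D1 x) -> is_pseries_germ c2 (fun x => N2 x / D2 x) ->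
  ex_pseries_germ H -> at_right 0 (fun x => N1 x * D2 x - N2 x * D1 x = x ^ n * H x) ->
  (j + k1 + k2 < n)%N -> c1 j = c2 j.
Proof.
move=> HD1 Ha1 HD2 Ha2 Hc1 Hc2 HH Hcross Hj.
have [m1 [g1 [Hm1 [_ [Hg1 HDg1]]]]] := is_pseries_germ_order HD1 Ha1.
have [m2 [g2 [Hm2 [_ [Hg2 HDg2]]]]] := is_pseries_germ_order HD2 Ha2.
have [h Hh] := ex_pseries_germ_mult HH (ex_pseries_germ_mult Hg1 Hg2).
have Hd := is_pseries_germ_plus Hc1 (is_pseries_germ_opp Hc2).
have Hq := is_pseries_germ_incr_n (n - m1 - m2) Hh.
have Hdq : at_right 0 (fun x =>
    x ^ (n - m1 - m2) * (H x * (/ g1 x * / g2 x)) = N1 x / D1 x + - (N2 x / D2 x)).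
  apply: filter_imp (at_right0_and at_right0_gt
    (at_right0_and Hcross (at_right0_and HDg1 HDg2))).
  move=> x [Hx [Hx_cross [[Hg1x HD1x] [Hg2x HD2x]]]].
  have Hxm p : x ^ p <> 0 by apply: pow_nonzero; lra.
  have Hn : x ^ n = x ^ (n - m1 - m2) * x ^ m1 * x ^ m2.
    by rewrite -!pow_add; congr (_ ^ _); lia.
  transitivity ((N1 x * D2 x - N2 x * D1 x) / (D1 x * D2 x)).
    by rewrite Hx_cross Hn HD1x HD2x; field.
  by rewrite HD1x HD2x; field.
have := is_pseries_germ_unique (is_pseries_germ_ext Hq Hdq) Hd j.
rewrite PS_incr_n_simplify /PS_plus /PS_opp /plus /=.
case: Compare_dec.le_lt_dec => [Hle | _ /esym]; first lia.
by rewrite /Hierarchy.opp /zero /=; lra.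
Qed.

(** * Analytic matrix functions and rank-one conjugation *)

Section AnalyticMatrices.
Local Open Scope ring_scope.

Definition ex_pseries_germ_mx (m n : nat) (F : R -> 'M[R]_(m, n)) : Prop :=
  forall i j, ex_pseries_germ (fun e => F e i j).

Lemma ex_pseries_germ_sum (I : Type) (r : seq I) (P : pred I) (F : I -> R -> R) :
  (forall i, ex_pseries_germ (F i)) ->
  ex_pseries_germ (fun x => \sum_(i <- r | P i) F i x).
Proof.
move=> HF; elim: r => [|i r IHr].
  apply: ex_pseries_germ_ext (ex_pseries_germ_cst 0) _.
  by apply: at_right0_pos => x _; rewrite big_nil.
case HPi: (P i).
- apply: ex_pseries_germ_ext (ex_pseries_germ_plus (HF i) IHr) _.
  by apply: at_right0_pos => x _; rewrite big_cons HPi.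
- by apply: ex_pseries_germ_ext IHr _; apply: at_right0_pos => x _; rewrite big_cons HPi.
Qed.

Lemma ex_pseries_germ_mx_const (m n : nat) (M : 'M[R]_(m, n)) :
  ex_pseries_germ_mx (fun _ => M).
Proof. by move=> i j; apply: ex_pseries_germ_cst. Qed.

Lemma ex_pseries_germ_mx_add (m n : nat) (F G : R -> 'M[R]_(m, n)) :
  ex_pseries_germ_mx F -> ex_pseries_germ_mx G -> ex_pseries_germ_mx (fun e => F e + G e).
Proof.
move=> HF HG i j; apply: ex_pseries_germ_ext (ex_pseries_germ_plus (HF i j) (HG i j)) _.
by apply: at_right0_pos => x _; rewrite mxE.
Qed.

Lemma ex_pseries_germ_mx_opp (m n : nat) (F : R -> 'M[R]_(m, n)) :
  ex_pseries_germ_mx F -> ex_pseries_germ_mx (fun e => - F e).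
Proof.
move=> HF i j; apply: ex_pseries_germ_ext (ex_pseries_germ_opp (HF i j)) _.
by apply: at_right0_pos => x _; rewrite mxE.
Qed.

Lemma ex_pseries_germ_mx_scale (m n : nat) (s : R -> R) (F : R -> 'M[R]_(m, n)) :
  ex_pseries_germ s -> ex_pseries_germ_mx F -> ex_pseries_germ_mx (fun e => s e *: F e).
Proof.
move=> Hs HF i j; apply: ex_pseries_germ_ext (ex_pseries_germ_mult Hs (HF i j)) _.
by apply: at_right0_pos => x _; rewrite mxE.
Qed.

Lemma ex_pseries_germ_mx_tr (m n : nat) (F : R -> 'M[R]_(m, n)) :
  ex_pseries_germ_mx F -> ex_pseries_germ_mx (fun e => (F e)^T).
Proof.
move=> HF i j; apply: ex_pseries_germ_ext (HF j i) _.
by apply: at_right0_pos => x _; rewrite mxE.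
Qed.

Lemma ex_pseries_germ_mx_mul (m n p : nat) (F : R -> 'M[R]_(m, n)) (G : R -> 'M[R]_(n, p)) :
  ex_pseries_germ_mx F -> ex_pseries_germ_mx G -> ex_pseries_germ_mx (fun e => F e *m G e).
Proof.
move=> HF HG i j.
have Hsum := ex_pseries_germ_sum (index_enum 'I_n) xpredT
  (fun k => ex_pseries_germ_mult (HF i k) (HG k j)).
by apply: ex_pseries_germ_ext Hsum _; apply: at_right0_pos => x _; rewrite mxE.
Qed.

Lemma ex_pseries_germ_mx_row (n : nat) (V : R -> 'rV[R]_n) :
  (forall i, analytic0 (fun e => V e ord0 i)) -> ex_pseries_germ_mx V.
Proof. by move=> HV i j; rewrite (ord1 i); apply: ex_pseries_germ_analytic0. Qed.

End AnalyticMatrices.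

Section RankOneConjugation.
Local Open Scope ring_scope.
Import GRing.Theory Num.Theory.
Variable F : numFieldType.

Lemma antisym_mx_le1 (k : nat) (S : 'M[F]_k) : (k <= 1)%N -> S^T = - S -> S = 0.
Proof.
move=> Hk HS; apply/matrixP => i j; rewrite mxE.
have -> : j = i by apply: ord_inj; move: (ltn_ord i) (ltn_ord j) Hk; lia.
have /matrixP/(_ i i) := HS; rewrite !mxE => Hii.
have /eqP : S i i *+ 2 = 0 by rewrite mulr2n {2}Hii subrr.
by rewrite mulrn_eq0 => /orP [//|/eqP].
Qed.

Lemma rank_le1_conj_antisym (n : nat) (M Y : 'M[F]_n) :
  (\rank M <= 1)%N -> Y^T = - Y -> M *m Y *m M^T = 0.
Proof.
move=> HM HY; rewrite -(mulmx_base M) trmx_mul; move: (col_base M) (row_base M) => C B.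
have -> : C *m B *m Y *m (B^T *m C^T) = C *m (B *m Y *m B^T) *m C^T by rewrite !mulmxA.
rewrite (@antisym_mx_le1 _ (B *m Y *m B^T) HM) ?mulmx0 ?mul0mx //.
by rewrite !trmx_mul trmxK HY mulNmx mulmxN mulmxA.
Qed.

End RankOneConjugation.

(** * Word probabilities of a normally parameterized chain *)

Section WordProbabilities.
Local Open Scope ring_scope.
Import GRing.Theory Num.Theory.

Lemma mx11_wedge (K : comPzRingType) (n : nat) (P Q : 'rV[K]_n) (x y : 'cV[K]_n) :
  (P *m (x *m y^T - y *m x^T) *m Q^T) ord0 ord0 =
  (P *m x) ord0 ord0 * (Q *m y) ord0 ord0 - (P *m y) ord0 ord0 * (Q *m x) ord0 ord0.
Proof.
have E (U V : 'M[K]_1) : (U *m V^T) ord0 ord0 = U ord0 ord0 * V ord0 ord0.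
  by rewrite mxE big_ord1 mxE.
rewrite mulmxBr mulmxBl !mulmxA -!mulmxA -!trmx_mul !mulmxA mxE [X in _ + X]mxE.
by rewrite !E.
Qed.

Variables (A B : nat) (Phi : 'I_B -> 'I_A) (Delta : R -> 'M[R]_B).

Lemma row_word_rcons (M : 'M[R]_B) (v : 'rV[R]_B) (w : seq 'I_A) (a : 'I_A) :
  row_word Phi M v (rcons w a) = row_word Phi M v w *m Delta_a Phi M a.
Proof. by elim: w v => [|b w IHw] v //=. Qed.

Lemma row_word_ge0 (M : 'M[R]_B) (v : 'rV[R]_B) (w : seq 'I_A) :
  nonneg_mx M -> (forall i, 0 <= v ord0 i) -> forall i, 0 <= row_word Phi M v w ord0 i.
Proof.
move=> HM; elim: w v => [|a w IHw] v Hv //=; apply: IHw => i.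
rewrite mxE; apply: sumr_ge0 => j _; apply: mulr_ge0 => //.
by rewrite mxE; case: (Phi i == a).
Qed.

Lemma p_v_rcons_le (V : R -> 'rV[R]_B) (w : seq 'I_A) (a : 'I_A) (e : R) :
  stochastic_mx (Delta e) -> in_W (V e) ->
  0 <= p_v Phi Delta V (rcons w a) e <= p_v Phi Delta V w e.
Proof.
move=> [HD HD1] [HV _].
have HW := row_word_ge0 w HD HV.
rewrite /p_v row_word_rcons -mulmxA !mxE; apply/andP; split.
- apply: sumr_ge0 => j _; apply: mulr_ge0 => //; rewrite !mxE.
  by apply: sumr_ge0 => l _; rewrite !mxE; case: (Phi l == a); rewrite ?mulr1.
- apply: ler_sum => j _; apply: ler_wpM2l => //.
  have -> : (const_mx 1 : 'cV[R]_B) j ord0 = \sum_(l < B) Delta e j l by rewrite mxE HD1.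
  by rewrite mxE; apply: ler_sum => l _; rewrite !mxE mulr1; case: (Phi l == a).
Qed.
End WordProbabilities.

Section NormalParameterization.
Local Open Scope ring_scope.
Import GRing.Theory.

Variables (A B : nat) (Phi : 'I_B -> 'I_A) (Delta : R -> 'M[R]_B).
Hypothesis Delta_analytic : forall i j, analytic0 (fun e => Delta e i j).
Hypothesis Delta0_rank : forall a, (\rank (Delta_a Phi (Delta 0) a) <= 1)%N.

Local Notation D e a := (Delta_a Phi (Delta e) a).

Lemma ex_pseries_germ_Delta_a (a : 'I_A) : ex_pseries_germ_mx (fun e => D e a).
Proof.
move=> i j; apply: ex_pseries_germ_ext
  (_ : ex_pseries_germ (fun e => if Phi j == a then Delta e i j else 0)) _.
- by case: (Phi j == a); [apply: ex_pseries_germ_analytic0 | apply: ex_pseries_germ_cst].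
- by apply: at_right0_pos => e _; rewrite mxE.
Qed.

Lemma ex_pseries_germ_Delta_a_diff_quot (a : 'I_A) :
  ex_pseries_germ_mx (fun e => e^-1 *: (D e a - D 0 a)).
Proof.
move=> i j; apply: ex_pseries_germ_ext
  (_ : ex_pseries_germ (fun e => if Phi j == a then (Delta e i j - Delta 0 i j) / e else 0)) _.
- by case: (Phi j == a); [apply: ex_pseries_germ_diff_quot | apply: ex_pseries_germ_cst].
- apply: at_right0_pos => e _; rewrite !mxE.
  by case: (Phi j == a); rewrite ?subrr ?mulr0 // mulrC.
Qed.

Lemma Delta_a_conj_antisym (a : 'I_A) (Y : R -> 'M[R]_B) :
  ex_pseries_germ_mx Y -> (forall e, (Y e)^T = - Y e) ->
  exists K : R -> 'M[R]_B, ex_pseries_germ_mx K /\ (forall e, (K e)^T = - K e) /\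
    forall e, e != 0 -> D e a *m Y e *m (D e a)^T = e *: K e.
Proof.
move=> HY HYa.
pose E e := e^-1 *: (D e a - D 0 a).
have HE := ex_pseries_germ_Delta_a_diff_quot a.
have HD0 := ex_pseries_germ_mx_const (D 0 a).
exists (fun e => D 0 a *m Y e *m (E e)^T + E e *m Y e *m (D 0 a)^T +
                 e *: (E e *m Y e *m (E e)^T)); split; [|split].
- apply: ex_pseries_germ_mx_add; [apply: ex_pseries_germ_mx_add|];
    last apply: ex_pseries_germ_mx_scale ex_pseries_germ_id _;
    by apply: ex_pseries_germ_mx_mul; [apply: ex_pseries_germ_mx_mul|apply: ex_pseries_germ_mx_tr].
- move=> e; move: (E e) (D 0 a) (Y e) (HYa e) => E0 D0 Y0 HY0.
  rewrite !linearD /= linearZ /= !trmx_mul !trmxK HY0 !mulNmx !mulmxN !mulmxA.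
  by rewrite scalerN -!opprD; congr (- (_ + _)); rewrite addrC.
- move=> e He; have Hr := Delta0_rank a.
  have -> : D e a = D 0 a + e *: E e by rewrite /E scalerA mulfV // scale1r addrC subrK.
  move: (E e) (D 0 a) (Y e) (HYa e) Hr => E0 D0 Y0 HY0 Hr.
  rewrite linearD /= linearZ /= !mulmxDl !mulmxDr (rank_le1_conj_antisym Hr HY0).
  by rewrite add0r -!scalemxAl -!scalemxAr !scalerDr scalerA addrA.
Qed.

Lemma row_word_conj_antisym (X : R -> 'M[R]_B) (w : seq 'I_A) :
  ex_pseries_germ_mx X -> (forall e, (X e)^T = - X e) ->
  exists Y : R -> 'M[R]_B, ex_pseries_germ_mx Y /\ (forall e, (Y e)^T = - Y e) /\
    forall e (v vh : 'rV[R]_B), e != 0 ->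
      row_word Phi (Delta e) v w *m X e *m (row_word Phi (Delta e) vh w)^T =
      e ^+ size w *: (v *m Y e *m vh^T).
Proof.
move=> HX HXa; elim: w => [|a w [Y [HY [HYa HYw]]]].
  by exists X; do 2!split=> //; move=> e v vh _; rewrite scale1r.
have [K [HK [HKa HKY]]] := Delta_a_conj_antisym a HY HYa.
exists K; split=> //; split=> // e v vh He /=.
rewrite HYw // trmx_mul !mulmxA -(mulmxA _ (D e a)) -(mulmxA _ (D e a *m Y e)) HKY //.
by rewrite -scalemxAr -scalemxAl scalerA exprSr.
Qed.

Lemma ex_pseries_germ_p_v (V : R -> 'rV[R]_B) (w : seq 'I_A) :
  (forall i, analytic0 (fun e => V e ord0 i)) -> ex_pseries_germ (p_v Phi Delta V w).
Proof.
move=> HV; suff HW : ex_pseries_germ_mx (fun e => row_word Phi (Delta e) (V e) w).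
  exact: ex_pseries_germ_mx_mul HW (ex_pseries_germ_mx_const _) ord0 ord0.
elim: w V {HV}(ex_pseries_germ_mx_row HV) => [//|a w IHw] V HV /=; apply: IHw.
exact: ex_pseries_germ_mx_mul HV (ex_pseries_germ_Delta_a a).
Qed.

Lemma p_v_rcons_cross (v vh : R -> 'rV[R]_B) (w : seq 'I_A) (a : 'I_A) :
  (forall i, analytic0 (fun e => v e ord0 i)) -> (forall i, analytic0 (fun e => vh e ord0 i)) ->
  exists H : R -> R, ex_pseries_germ H /\ forall e, e != 0 ->
    p_v Phi Delta v (rcons w a) e * p_v Phi Delta vh w e -
    p_v Phi Delta vh (rcons w a) e * p_v Phi Delta v w e = e ^+ size w * H e.
Proof.
move=> Hv Hvh.
pose u e : 'cV[R]_B := D e a *m const_mx 1.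
pose X e := u e *m (const_mx 1)^T - const_mx 1 *m (u e)^T.
have Hu : ex_pseries_germ_mx u.
  exact: ex_pseries_germ_mx_mul (ex_pseries_germ_Delta_a a) (ex_pseries_germ_mx_const _).
have HX : ex_pseries_germ_mx X.
  apply: ex_pseries_germ_mx_add; last apply: ex_pseries_germ_mx_opp;
    apply: ex_pseries_germ_mx_mul; auto using ex_pseries_germ_mx_tr, ex_pseries_germ_mx_const.
have HXa e : (X e)^T = - X e by rewrite /X linearB /= !trmx_mul !trmxK opprB.
have [Y [HY [_ HYw]]] := row_word_conj_antisym w HX HXa.
exists (fun e => (v e *m Y e *m (vh e)^T) ord0 ord0); split.
  apply: ex_pseries_germ_mx_mul; last exact/ex_pseries_germ_mx_tr/ex_pseries_germ_mx_row.
  exact: ex_pseries_germ_mx_mul (ex_pseries_germ_mx_row Hv) HY.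
move=> e He; have := congr1 (fun M : 'M[R]_1 => M ord0 ord0) (HYw e (v e) (vh e) He).
rewrite /= [in Z in _ = Z]mxE /X mx11_wedge => <-.
by rewrite /p_v !row_word_rcons /u !mulmxA [in Z in _ - Z = _]mulrC.
Qed.

End NormalParameterization.

Lemma p_cond_rcons (A B : nat) (Phi : 'I_B -> 'I_A) (Delta : R -> 'M[R]_B)
    (V : R -> 'rV[R]_B) (w : seq 'I_A) (a : 'I_A) :
  p_cond Phi Delta V (rcons w a) =
  (fun e => p_v Phi Delta V (rcons w a) e / p_v Phi Delta V w e).
Proof. by rewrite /p_cond size_rcons -cats1 take_size_cat. Qed.

Lemma is_taylor0_p_cond (A B : nat) (Phi : 'I_B -> 'I_A) (Delta : R -> 'M[R]_B)
    (V : R -> 'rV[R]_B) (w : seq 'I_A) (a : 'I_A) (k : nat) :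
  (forall e : R, (0 <= e)%R -> stochastic_mx (Delta e)) ->
  (forall i j, analytic0 (fun e => Delta e i j)) ->
  (forall e : R, (0 <= e)%R -> in_W (V e)) -> (forall i, analytic0 (fun e => V e ord0 i)) ->
  ord_le (p_v Phi Delta V w) k ->
  exists c, is_taylor0 c (p_cond Phi Delta V (rcons w a)).
Proof.
move=> Hst HD HW HV [b [/is_taylor0_germ Hb [j [_ Hbj]]]].
have Hdom : at_right 0 (fun e =>
    Rabs (p_v Phi Delta V (rcons w a) e) <= Rabs (p_v Phi Delta V w e)).
  apply: at_right0_pos => e He; have He0 : (0 <= e)%R by apply/RleP/Rlt_le.
  have /andP [/ler0_Rle HN /RleP HND] := p_v_rcons_le Phi w a (Hst e He0) (HW e He0).
  by rewrite !Rabs_pos_eq //; lra.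
have HN := ex_pseries_germ_p_v Phi HD (rcons w a) HV.
have [c Hc] := ex_pseries_germ_div_dominated Hb Hbj HN Hdom.
by exists c; apply/is_taylor0_germ; rewrite p_cond_rcons.
Qed.

Theorem lemma2p6 (A B : nat) (Phi : 'I_B -> 'I_A) (Delta : R -> 'M[R]_B)
  (v vh : R -> 'rV[R]_B) (n k : nat) (z : seq 'I_A) :
  (forall e : R, (0 <= e)%R -> stochastic_mx (Delta e)) ->
  normally_parameterized Phi Delta ->
  (forall e : R, (0 <= e)%R -> in_W (v e)) ->
  (forall e : R, (0 <= e)%R -> in_W (vh e)) ->
  (forall i, analytic0 (fun e => v e ord0 i)) ->
  (forall i, analytic0 (fun e => vh e ord0 i)) ->
  size z = n.+1 ->
  ord_le (p_v Phi Delta v (take n z)) k ->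
  ord_le (p_v Phi Delta vh (take n z)) k ->
  (exists c, is_taylor0 c (p_cond Phi Delta v z)) /\
  (exists c, is_taylor0 c (p_cond Phi Delta vh z)) /\
  (forall c chat : nat -> R,
     is_taylor0 c (p_cond Phi Delta v z) ->
     is_taylor0 chat (p_cond Phi Delta vh z) ->
     forall j : nat, (j + 4 * k + 1 <= n)%N -> c j = chat j).
Proof.
move=> Hst [HD [_ Hrank]] HWv HWvh Hv Hvh.
case/lastP: z => [//|w a]; rewrite size_rcons => -[Hw].
rewrite -cats1 take_size_cat // cats1 => Hordv Hordvh.
split; first exact: is_taylor0_p_cond Hst HD HWv Hv Hordv.
split; first exact: is_taylor0_p_cond Hst HD HWvh Hvh Hordvh.
move=> c ch; rewrite !p_cond_rcons => /is_taylor0_germ Hc /is_taylor0_germ Hch j Hj.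
move: Hordv Hordvh => [b [/is_taylor0_germ Hb [k1 [Hk1 Hbk1]]]].
move=> [bh [/is_taylor0_germ Hbh [k2 [Hk2 Hbhk2]]]].
have [H [HH Hcross]] := p_v_rcons_cross HD Hrank w a Hv Hvh.
apply: (is_pseries_germ_div_coef_eq (n := size w) Hb Hbk1 Hbh Hbhk2 Hc Hch HH); last by lia.
by apply: at_right0_pos => e He; rewrite RpowE; apply: Hcross; apply/eqP/Rgt_not_eq.
Qed.
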